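(* Let $G,H$ be finite simple graphs, $x\in V(G)$, $y\in V(H)$. Then the graph $\big(S(x)*B(y)\big)\cup\big(B(x)*S(y)\big)$ (that is, the unit sphere $S_{G*H}(x,y)$) is homotopic to the join $S(x)\oplus S(y)$: the clique complexes of the two graphs are homotopy equivalent. In particular $\chi(S_{G*H}(x,y))=\chi(S(x)\oplus S(y))$.
   Context: All graphs are finite simple graphs. For a vertex $x$ of $G$, $S(x)$ is the subgraph induced on the vertices adjacent to $x$, and $B(x)$ is the subgraph induced on $V(S(x))\cup\{x\}$. The strong product $G*H$ has vertex set $V(G)\times V(H)$, two distinct vertices $(a,b),(c,d)$ being adjacent iff ($a=c$ or $a\sim c$ in $G$) and ($b=d$ or $b\sim d$ in $H$); for induced subgraphs $A\subseteq G$, $C\subseteq H$, $A*C$ is the subgraph of $G*H$ induced on $V(A)\times V(C)$, and a union of such subgraphs means the subgraph induced on the union of vertex sets. The (Zykov) join $A\oplus C$ of two graphs is their disjoint union together with all edges between a vertex of $A$ and a vertex of $C$. The clique (Whitney) complex of a graph is the simplicial complex of its vertex sets of complete subgraphs. The Euler characteristic is $\chi(G)=\sum_{k\ge0}(-1)^k f_k(G)$, where $f_k(G)$ is the number of complete subgraphs with $k+1$ vertices ($\chi$ of the empty graph is $0$). *)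

From mathcomp Require Import all_boot all_order all_algebra.
From mathcomp Require Import reals Rstruct.
Set Implicit Arguments. Unset Strict Implicit. Unset Printing Implicit Defensive.
Import Order.TTheory GRing.Theory Num.Theory.
Local Open Scope ring_scope.

(* A finite simple graph is a finType T with a symmetric irreflexive e : rel T.
   Induced subgraphs are represented by their vertex sets A : {set T}. *)
Definition simple_graph (T : finType) (e : rel T) : Prop :=
  symmetric e /\ irreflexive e.

Definition sphere (T : finType) (e : rel T) (x : T) : {set T} := [set y | e x y].
Definition ball (T : finType) (e : rel T) (x : T) : {set T} := x |: sphere e x.

Definition strong_rel (T1 T2 : finType) (e1 : rel T1) (e2 : rel T2) : rel (T1 * T2) :=
  fun a b => [&& a != b, (a.1 == b.1) || e1 a.1 b.1 & (a.2 == b.2) || e2 a.2 b.2].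

Definition join_rel (T1 T2 : finType) (e1 : rel T1) (e2 : rel T2) : rel (T1 + T2) :=
  fun a b => match a, b with
             | inl u, inl v => e1 u v
             | inr u, inr v => e2 u v
             | _, _ => true
             end.

Definition prod_sphere (T1 T2 : finType) (e1 : rel T1) (e2 : rel T2) (x : T1) (y : T2)
  : {set T1 * T2} :=
  setX (sphere e1 x) (ball e2 y) :|: setX (ball e1 x) (sphere e2 y).

Definition join_sphere (T1 T2 : finType) (e1 : rel T1) (e2 : rel T2) (x : T1) (y : T2)
  : {set T1 + T2} :=
  (@inl T1 T2 @: sphere e1 x) :|: (@inr T1 T2 @: sphere e2 y).

Definition clique (T : finType) (e : rel T) (A s : {set T}) : bool :=
  (s \subset A) && [forall u in s, forall v in s, (u != v) ==> e u v].

Definition fvec (T : finType) (e : rel T) (A : {set T}) (k : nat) : nat :=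
  #|[set s : {set T} | clique e A s & #|s| == k.+1]|.

(* Euler characteristic (complete subgraphs have at most #|T| vertices) *)
Definition euler_char (T : finType) (e : rel T) (A : {set T}) : int :=
  \sum_(k < #|T|) (-1) ^+ k * (fvec e A k)%:Z.

Section Realization.
Variable R : realType.

Definition supdist (V : finType) (p q : V -> R) : R :=
  \big[Num.max/0]_(v : V) `|p v - q v|.

(* geometric realization |K(A)| of the clique complex, inside R^T:
   barycentric coordinates whose support is a simplex *)
Definition realization (T : finType) (e : rel T) (A : {set T}) : (T -> R) -> Prop :=
  fun p => [/\ forall v, 0 <= p v, \sum_(v : T) p v = 1
             & clique e A [set v | p v != 0]].

Definition cont_on (V W : finType) (X : (V -> R) -> Prop) (f : (V -> R) -> (W -> R)) : Prop :=
  forall p, X p -> forall eps : R, 0 < eps -> exists2 delta : R, 0 < delta &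
    forall q, X q -> supdist p q < delta -> supdist (f p) (f q) < eps.

Definition homotopic_on (V W : finType) (X : (V -> R) -> Prop) (Y : (W -> R) -> Prop)
  (f0 f1 : (V -> R) -> (W -> R)) : Prop :=
  exists h : R -> (V -> R) -> (W -> R),
    [/\ (forall t p, 0 <= t <= 1 -> X p -> Y (h t p)),
        (forall t p, 0 <= t <= 1 -> X p -> forall eps : R, 0 < eps ->
           exists2 delta : R, 0 < delta & forall s q, 0 <= s <= 1 -> X q ->
             `|t - s| < delta -> supdist p q < delta -> supdist (h t p) (h s q) < eps),
        (forall p, X p -> h 0 p = f0 p)
      & (forall p, X p -> h 1 p = f1 p)].

Definition homotopy_equivalent (V W : finType) (X : (V -> R) -> Prop) (Y : (W -> R) -> Prop)
  : Prop :=
  exists (f : (V -> R) -> (W -> R)) (g : (W -> R) -> (V -> R)),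
    [/\ cont_on X f, (forall p, X p -> Y (f p)),
        cont_on Y g & (forall q, Y q -> X (g q))] /\
    (homotopic_on X X (fun p => g (f p)) id /\
     homotopic_on Y Y (fun q => f (g q)) id).

End Realization.

(* Two vertex maps drive the proof: squash : P -> J sends (x, b) to b and (a, b) to a
   for a <> x, and embed : J -> P sends a to (a, y) and b to (x, b).  Both are
   simplicial, squash \o embed is the identity on J, and embed \o squash moves each
   clique of P only within a larger clique of P (it is contiguous to the identity).

   - Topology: pushing barycentric coordinates forward along a simplicial map gives a
     Lipschitz map between realizations; the straight-line homotopy between
     push (embed \o squash) and the identity stays in the realization by contiguity.
   - Euler characteristic: toggling the vertex (a, y) above the first interior vertex
     (a, b) in S(x) * S(y) is a sign-reversing involution on the nonempty cliques of P
     meeting the interior; the others correspond, via embed, to the cliques of J. *)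

From mathcomp Require Import all_boot all_order all_algebra.
From mathcomp Require Import reals Rstruct.
From mathcomp Require Import ring lra.
From Stdlib Require Import Rdefinitions.
Set Implicit Arguments. Unset Strict Implicit. Unset Printing Implicit Defensive.
Import Order.TTheory GRing.Theory Num.Theory.
Local Open Scope ring_scope.

Section CliqueComplex.
Variables (T : finType) (e : rel T).
Implicit Types (A s t : {set T}).

Lemma clique_sub A s : clique e A s -> s \subset A.
Proof. by case/andP. Qed.

Lemma clique_edge A s u v : clique e A s -> u \in s -> v \in s -> u != v -> e u v.
Proof.
by case/andP=> _ /forall_inP cl us vs; move: (cl u us) => /forall_inP/(_ v vs)/implyP.
Qed.

Lemma cliqueI A s : s \subset A -> {in s &, forall u v, u != v -> e u v} -> clique e A s.
Proof.
move=> sA cl; rewrite /clique sA; apply/forall_inP => u us; apply/forall_inP => v vs.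
exact/implyP/cl.
Qed.

Lemma cliqueS A s t : clique e A s -> t \subset s -> clique e A t.
Proof.
move=> cl ts; apply: cliqueI => [|u v ut vt]; first exact: subset_trans ts (clique_sub cl).
exact: clique_edge cl (subsetP ts u ut) (subsetP ts v vt).
Qed.

Definition nonempty_clique A s : bool := clique e A s && (s != set0).

Lemma euler_charE A :
  euler_char e A = \sum_(s | nonempty_clique A s) (-1) ^+ #|s|.-1.
Proof.
rewrite /euler_char /fvec /nonempty_clique.
under eq_bigr => k _ do rewrite -[(_)%:Z]natz mulr_natr -sumr_const big_mkcond /=.
rewrite exchange_big /= [RHS]big_mkcond /=; apply: eq_bigr => s _.
under eq_bigr => k _ do rewrite inE.
case: (clique e A s) => /=; last by rewrite big1.
have [->|s0] := eqP; first by rewrite big1 // => k _; rewrite cards0.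
have s_gt0 : (0 < #|s|)%nat by rewrite card_gt0; apply/eqP.
have s_lt : (#|s|.-1 < #|T|)%nat by rewrite prednK //; exact: max_card.
rewrite (bigD1 (Ordinal s_lt)) //= prednK // eqxx big1 ?addr0 // => k /eqP nk.
by case: eqP => // hk; case: nk; apply: val_inj => /=; rewrite hk.
Qed.

End CliqueComplex.

Lemma sum_involution0 (I : finType) (P : pred I) (w : I -> int) (h : I -> I) :
  involutive h -> (forall i, P (h i) = P i) -> (forall i, P i -> w (h i) = - w i) ->
  \sum_(i | P i) w i = 0.
Proof.
move=> hK hP hw.
have sumN : \sum_(i | P i) w i = - \sum_(i | P i) w i.
  rewrite {1}(reindex_inj (inv_inj hK)) /= -sumrN.
  by apply: eq_big => i; rewrite hP // => /hw.
by apply/eqP; rewrite -(eqr_pMn2r (isT : (0 < 2)%nat)) mul0rn mulr2n {2}sumN subrr.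
Qed.

Definition toggle (T : finType) (v : T) (s : {set T}) : {set T} :=
  if v \in s then s :\ v else v |: s.

Lemma toggleK (T : finType) (v : T) : involutive (toggle v).
Proof.
move=> s; rewrite /toggle; case vs: (v \in s); first by rewrite setD11 setD1K.
by rewrite setU11 setU1K // vs.
Qed.

Lemma card_toggle (T : finType) (v : T) (s : {set T}) :
  #|toggle v s| = if v \in s then #|s|.-1 else #|s|.+1.
Proof.
rewrite /toggle; case: ifP => vs; last by rewrite cardsU1 vs.
by rewrite (cardsD1 v s) vs.
Qed.

Section Realizations.
Variable R : realType.

Section SupDistance.
Variable V : finType.
Implicit Types p q : V -> R.

Lemma supdist_ge p q v : `|p v - q v| <= supdist p q.
Proof. by rewrite /supdist (bigD1 v) //= le_max lexx. Qed.

Lemma supdist_ge0 p q : 0 <= supdist p q.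
Proof. by rewrite /supdist; elim/big_ind: _ => // a b ha hb; rewrite le_max ha. Qed.

Lemma supdist_lt p q (c : R) : 0 < c -> (forall v, `|p v - q v| < c) -> supdist p q < c.
Proof.
by move=> c0 cb; rewrite /supdist; elim/big_ind: _ => // a b ha hb; rewrite gt_max ha.
Qed.

End SupDistance.

Definition lipschitz (V W : finType) (K : R) (F : (V -> R) -> (W -> R)) : Prop :=
  forall p q w, `|F p w - F q w| <= K * supdist p q.

Lemma lipschitz_id (V : finType) : lipschitz 1 (@id (V -> R)).
Proof. by move=> p q v; rewrite mul1r supdist_ge. Qed.

Lemma lipschitz_cont (V W : finType) (X : (V -> R) -> Prop) (F : (V -> R) -> (W -> R))
    (K : R) :
  0 <= K -> lipschitz K F -> cont_on X F.
Proof.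
move=> K0 FK p _ eps eps0.
have K1 : 0 < K + 1 by lra.
have delta0 : 0 < eps / (K + 1) by exact: divr_gt0.
exists (eps / (K + 1)) => // q _ pq; apply: supdist_lt => // w.
have epsE : eps / (K + 1) * (K + 1) = eps by rewrite divfK // gt_eqF.
have := FK p q w; have := supdist_ge0 p q.
set d := eps / (K + 1) in delta0 epsE pq *; nra.
Qed.

Section Pushforward.
Variables (V W : finType) (f : V -> W).
Implicit Types (p : V -> R).

Definition push p : W -> R := fun w => \sum_(v | f v == w) p v.

Lemma push_ge0 p w : (forall v, 0 <= p v) -> 0 <= push p w.
Proof. by move=> p0; apply: sumr_ge0. Qed.

Lemma push_sum p : \sum_w push p w = \sum_v p v.
Proof. by rewrite (partition_big f xpredT) //. Qed.

Lemma push_neq0 p w : push p w != 0 -> exists2 v, p v != 0 & f v = w.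
Proof.
move=> pw; case: (pickP (fun v => (p v != 0) && (f v == w))) => [v /andP[pv /eqP fv]|none].
  by exists v.
case/eqP: pw; apply: big1 => v fv; apply/eqP/negPn.
by have := none v; rewrite fv andbT => ->.
Qed.

Lemma push_supp p : [set w | push p w != 0] \subset f @: [set v | p v != 0].
Proof.
apply/subsetP => w; rewrite inE => /push_neq0[v pv <-].
by rewrite imset_f // inE.
Qed.

Lemma push_lipschitz : lipschitz #|V|%:R push.
Proof.
move=> p q w; rewrite /push -sumrB; apply: le_trans (ler_norm_sum _ _ _) _.
rewrite -sum1_card natr_sum mulr_suml big_mkcond /=.
apply: ler_sum => v _; rewrite mul1r; case: ifP => _; first exact: supdist_ge.
exact: supdist_ge0.
Qed.

End Pushforward.

Lemma push_id_on (V : finType) (f : V -> V) (p : V -> R) :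
  (forall v, p v != 0 -> f v = v) -> push f p = p.
Proof.
move=> fid; apply: boolp.funext => w.
transitivity (\sum_(v | v == w) p v); last exact: big_pred1_eq.
rewrite /push [LHS]big_mkcond [RHS]big_mkcond; apply: eq_bigr => v _.
by have [->|/fid ->] := eqVneq (p v) 0; rewrite ?if_same.
Qed.

Lemma push_comp (U V W : finType) (f : U -> V) (g : V -> W) (p : U -> R) :
  push g (push f p) = push (g \o f) p.
Proof.
apply: boolp.funext => w; rewrite /push (partition_big f (fun v => g v == w)) //=.
apply: eq_bigr => v /eqP gv; apply: eq_bigl => u.
by case: (f u =P v) => [->|]; rewrite ?gv ?eqxx ?andbF.
Qed.

Section RealizationFacts.
Variables (T : finType) (e : rel T) (A : {set T}).
Implicit Types p q : T -> R.

Lemma realization_ge0 p v : realization e A p -> 0 <= p v.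
Proof. by case. Qed.

Lemma realization_le1 p v : realization e A p -> p v <= 1.
Proof. by case=> p0 p1 _; rewrite -p1 (bigD1 v) //= lerDl sumr_ge0. Qed.

Lemma realization_supp p v : realization e A p -> p v != 0 -> v \in A.
Proof. by case=> _ _ /clique_sub/subsetP sA pv; apply: sA; rewrite inE. Qed.

Lemma realization_mix p q (t : R) : 0 <= t <= 1 ->
  realization e A p -> realization e A q ->
  clique e A ([set v | p v != 0] :|: [set v | q v != 0]) ->
  realization e A (fun v => (1 - t) * p v + t * q v).
Proof.
move=> /andP[t0 t1] [p0 p1 _] [q0 q1 _] cl; split.
- by move=> v; rewrite addr_ge0 // mulr_ge0 // subr_ge0.
- by rewrite big_split /= -!mulr_sumr p1 q1 !mulr1 subrK.
apply: cliqueS cl _; apply/subsetP => v; rewrite !inE.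
by apply: contraNT; rewrite negb_or !negbK => /andP[/eqP-> /eqP->]; rewrite !mulr0 addr0.
Qed.

End RealizationFacts.

Definition simplicial (T T' : finType) (e : rel T) (A : {set T}) (e' : rel T')
    (A' : {set T'}) (f : T -> T') : Prop :=
  forall s, clique e A s -> clique e' A' (f @: s).

Lemma push_realization (T T' : finType) (e : rel T) (A : {set T}) (e' : rel T')
    (A' : {set T'}) (f : T -> T') (p : T -> R) :
  simplicial e A e' A' f -> realization e A p -> realization e' A' (push f p).
Proof.
move=> fS [p0 p1 cl]; split; first by move=> w; exact: push_ge0.
  by rewrite push_sum.
exact: cliqueS (fS _ cl) (push_supp f p).
Qed.

Lemma convex_mix_dist (a b a' b' t s : R) :
  0 <= t <= 1 -> 0 <= s <= 1 -> 0 <= b <= 1 -> 0 <= b' <= 1 ->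
  `|((1 - t) * a + t * a') - ((1 - s) * b + s * b')|
    <= `|a - b| + `|a' - b'| + 2 * `|t - s|.
Proof.
move=> /andP[t0 t1] /andP[s0 s1] /andP[b0 b1] /andP[b'0 b'1].
have -> : (1 - t) * a + t * a' - ((1 - s) * b + s * b') =
  (1 - t) * (a - b) + t * (a' - b') + (t - s) * (b' - b) by ring.
apply: le_trans (ler_normD _ _) _; apply: le_trans (lerD (ler_normD _ _) (lexx _)) _.
have t0' : 0 <= 1 - t by lra.
rewrite !normrM (ger0_norm t0) (ger0_norm t0').
have : `|b' - b| <= 2 by rewrite ler_norml; apply/andP; split; lra.
have := normr_ge0 (a - b); have := normr_ge0 (a' - b'); have := normr_ge0 (t - s).
nra.
Qed.

Lemma straight_line_homotopic (V W : finType) (X : (V -> R) -> Prop)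
    (Y : (W -> R) -> Prop) (F0 F1 : (V -> R) -> (W -> R)) (K0 K1 : R) :
  0 <= K0 -> 0 <= K1 -> lipschitz K0 F0 -> lipschitz K1 F1 ->
  (forall p w, X p -> 0 <= F0 p w <= 1) -> (forall p w, X p -> 0 <= F1 p w <= 1) ->
  (forall t p, 0 <= t <= 1 -> X p -> Y (fun w => (1 - t) * F0 p w + t * F1 p w)) ->
  homotopic_on X Y F0 F1.
Proof.
move=> K00 K10 F0K F1K F0b F1b mixY.
exists (fun t p w => (1 - t) * F0 p w + t * F1 p w); split => //.
- move=> t p ht Xp eps eps0.
  have M0 : 0 < K0 + K1 + 2 by lra.
  have delta0 : 0 < eps / (K0 + K1 + 2) by exact: divr_gt0.
  have epsE : eps / (K0 + K1 + 2) * (K0 + K1 + 2) = eps by rewrite divfK // gt_eqF.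
  exists (eps / (K0 + K1 + 2)) => // s q hs Xq ts pq; apply: supdist_lt => // w.
  apply: le_lt_trans (convex_mix_dist _ _ ht hs (F0b q w Xq) (F1b q w Xq)) _.
  have := F0K p q w; have := F1K p q w; have := supdist_ge0 p q.
  set d := eps / (K0 + K1 + 2) in delta0 epsE ts pq *; nra.
- by move=> p _; apply: boolp.funext => w; rewrite subr0 mul1r mul0r addr0.
- by move=> p _; apply: boolp.funext => w; rewrite subrr mul0r add0r mul1r.
Qed.

Lemma homotopic_on_fixed (V : finType) (X : (V -> R) -> Prop) (F : (V -> R) -> (V -> R)) :
  (forall p, X p -> F p = p) -> homotopic_on X X F id.
Proof.
move=> Fid; exists (fun _ p => p); split => //; last by move=> p /Fid.
by move=> t p _ _ eps eps0; exists eps.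
Qed.

End Realizations.

Section StrongProductSphere.
Variables (T1 T2 : finType) (e1 : rel T1) (e2 : rel T2).
Hypotheses (HG : simple_graph e1) (HH : simple_graph e2).
Variables (x : T1) (y : T2).

Let irr1 a : e1 a a = false. Proof. by case: HG => _ ->. Qed.
Let irr2 b : e2 b b = false. Proof. by case: HH => _ ->. Qed.
Let sym1 a a' : e1 a a' = e1 a' a. Proof. by case: HG => ->. Qed.
Let sym2 b b' : e2 b b' = e2 b' b. Proof. by case: HH => ->. Qed.

Notation sr := (strong_rel e1 e2).
Notation PS := (prod_sphere e1 e2 x y).
Notation jr := (join_rel e1 e2).
Notation JS := (join_sphere e1 e2 x y).

Lemma neq_center1 a : e1 x a -> (a == x) = false.
Proof. by apply: contraTF => /eqP->; rewrite irr1. Qed.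

Lemma neq_center2 b : e2 y b -> (b == y) = false.
Proof. by apply: contraTF => /eqP->; rewrite irr2. Qed.

Lemma in_prod_sphere u : (u \in PS) =
  [&& (u.1 == x) || e1 x u.1, (u.2 == y) || e2 y u.2 & u != (x, y)].
Proof.
case: u => a b; rewrite /prod_sphere !inE /= xpair_eqE.
by case: (a =P x) => [->|_]; case: (b =P y) => [->|_]; rewrite ?irr1 ?irr2 /=;
  case: (e1 x a); case: (e2 y b).
Qed.

Lemma in_join_sphere v : (v \in JS) = match v with inl a => e1 x a | inr b => e2 y b end.
Proof.
rewrite /join_sphere inE; case: v => c.
- rewrite (mem_imset _ _ (@inl_inj T1 T2)) inE; apply/orP/idP => [[//|]|]; last by left.
  by case/imsetP.
- rewrite (mem_imset _ _ (@inr_inj T1 T2)) inE; apply/orP/idP => [[|//]|]; last by right.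
  by case/imsetP.
Qed.

Definition near (u v : T1 * T2) : bool :=
  ((u.1 == v.1) || e1 u.1 v.1) && ((u.2 == v.2) || e2 u.2 v.2).

Lemma near_sym u v : near u v = near v u.
Proof. by rewrite /near (eq_sym u.1) (eq_sym u.2) sym1 sym2. Qed.

Lemma strong_cliqueI (A s : {set T1 * T2}) :
  s \subset A -> {in s &, forall u v, near u v} -> clique sr A s.
Proof.
by move=> sA sN; apply: cliqueI => // u v us vs uv; rewrite /strong_rel uv; exact: sN.
Qed.

Lemma strong_clique_near (A s : {set T1 * T2}) u v :
  clique sr A s -> u \in s -> v \in s -> near u v.
Proof.
move=> cl us vs; have [<-|uv] := eqVneq u v; first by rewrite /near !eqxx.
by case/and3P: (clique_edge cl us vs uv) => _ h1 h2; rewrite /near h1 h2.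
Qed.

Definition squash (u : T1 * T2) : T1 + T2 := if u.1 == x then inr u.2 else inl u.1.
Definition embed (v : T1 + T2) : T1 * T2 :=
  match v with inl a => (a, y) | inr b => (x, b) end.

Lemma squash_in u : u \in PS -> squash u \in JS.
Proof.
rewrite in_prod_sphere in_join_sphere /squash; case: u => a b /=.
rewrite xpair_eqE; case: (a =P x) => [->|_] /=; last by case/andP.
by case: (b =P y) => //= _; rewrite andbT.
Qed.

Lemma embed_in v : v \in JS -> embed v \in PS.
Proof.
rewrite in_join_sphere in_prod_sphere; case: v => [a|b] /= h; rewrite xpair_eqE h orbT eqxx.
- by rewrite neq_center1.
- by rewrite neq_center2 // andbF.
Qed.

Lemma squash_embed v : v \in JS -> squash (embed v) = v.
Proof.
by rewrite in_join_sphere /squash; case: v => [a /neq_center1 ->|b] //=; rewrite eqxx.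
Qed.

(* Off the "interior" S(x) * S(y), every vertex of the sphere lies on one of the two
   axes S(x) * y and x * S(y), where embed undoes squash. *)
Lemma embed_squash u : u \in PS -> ~~ (e1 x u.1 && e2 y u.2) -> embed (squash u) = u.
Proof.
rewrite in_prod_sphere /squash; case: u => a b /=.
case: (a =P x) => [->|_] //= /andP[-> /andP[/orP[/eqP-> //|]]].
by move=> ->.
Qed.

Lemma squash_simplicial : simplicial sr PS jr JS squash.
Proof.
move=> s cl; apply: cliqueI => [|_ _ /imsetP[u us ->] /imsetP[v vs ->] uv].
  by apply/subsetP => _ /imsetP[u us ->]; exact/squash_in/(subsetP (clique_sub cl)).
move: uv (strong_clique_near cl us vs); rewrite /squash /near.
case: (u.1 =P x) => [ux|_]; case: (v.1 =P x) => [vx|_] //= uv /andP[h1 h2].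
- by case/orP: h2 uv => [/eqP->|//]; rewrite eqxx.
- by case/orP: h1 uv => [/eqP->|//]; rewrite eqxx.
Qed.

Lemma embed_simplicial : simplicial jr JS sr PS embed.
Proof.
move=> t cl; apply: strong_cliqueI => [|_ _ /imsetP[v vt ->] /imsetP[w wt ->]].
  by apply/subsetP => _ /imsetP[v vt ->]; exact/embed_in/(subsetP (clique_sub cl)).
have [<-|vw] := eqVneq v w; first by rewrite /near !eqxx.
have := clique_edge cl vt wt vw.
have /subsetP tJS := clique_sub cl.
move: (tJS v vt) (tJS w wt); rewrite !in_join_sphere /near.
case: v {vt vw} => [a|b]; case: w {wt} => [a'|b'] /= hv hw hvw;
  rewrite ?eqxx ?hvw ?hv ?hw ?orbT //.
- by rewrite andbT sym1 hv orbT.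
- by rewrite sym2 hv orbT.
Qed.

Lemma near_retract u w : u \in PS -> w \in PS -> near u w -> near (embed (squash u)) w.
Proof.
rewrite !in_prod_sphere /squash /near; case: (u.1 =P x) => [ux|_] /=.
  by case: u ux => a b /= ->.
by move=> _ /and3P[_ w2 _] /andP[-> _]; rewrite eq_sym w2.
Qed.

Lemma retract_clique s : clique sr PS s -> clique sr PS (s :|: (embed \o squash) @: s).
Proof.
move=> cl; have /subsetP sPS := clique_sub cl.
have rPS u : u \in s -> embed (squash u) \in PS by move/sPS/squash_in/embed_in.
apply: strong_cliqueI => [|u v].
  by rewrite subUset (clique_sub cl); apply/subsetP => _ /imsetP[u /rPS ? ->].
rewrite !inE => /orP[us|/imsetP[u' us ->]] /orP[vs|/imsetP[v' vs ->]] /=.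
- exact: strong_clique_near cl us vs.
- by rewrite near_sym near_retract ?rPS ?sPS // near_sym (strong_clique_near cl us vs).
- by rewrite near_retract ?rPS ?sPS // (strong_clique_near cl us vs).
- rewrite near_retract ?rPS ?sPS // near_sym near_retract ?rPS ?sPS //.
  exact: strong_clique_near cl vs us.
Qed.

Lemma prod_sphere_homotopy_equivalent (R : realType) :
  homotopy_equivalent (@realization R _ sr PS) (@realization R _ jr JS).
Proof.
have retract_simplicial : simplicial sr PS sr PS (embed \o squash).
  by move=> s /retract_clique/cliqueS; apply; rewrite subsetUr.
exists (push squash), (push embed); split; [split|split].
- exact: lipschitz_cont (ler0n _ _) (push_lipschitz squash).
- by move=> p; apply: push_realization squash_simplicial.
- exact: lipschitz_cont (ler0n _ _) (push_lipschitz embed).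
- by move=> q; apply: push_realization embed_simplicial.
- have -> : (fun p => push embed (push squash p)) = push (embed \o squash) :> (_ -> _ -> R).
    by apply: boolp.funext => p; rewrite push_comp.
  apply: straight_line_homotopic (ler0n _ _) ler01 (push_lipschitz _) (@lipschitz_id _ _)
    _ _ _.
  + move=> p u /(push_realization retract_simplicial) Xp.
    by rewrite (realization_ge0 u Xp) (realization_le1 u Xp).
  + by move=> p u Xp; rewrite (realization_ge0 u Xp) (realization_le1 u Xp).
  + move=> t p ht Xp; have [_ _ /retract_clique cl] := Xp.
    apply: realization_mix ht (push_realization retract_simplicial Xp) Xp (cliqueS cl _).
    by rewrite setUC setUS // push_supp.
- apply: homotopic_on_fixed => q Xq; rewrite push_comp push_id_on // => v qv /=.
  exact/squash_embed/(realization_supp Xq qv).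
Qed.

Definition interior_vertex (s : {set T1 * T2}) : pred (T1 * T2) :=
  fun u => [&& u \in s, e1 x u.1 & e2 y u.2].

Definition has_interior (s : {set T1 * T2}) : bool := [exists u, interior_vertex s u].

(* flip toggles (a, y) for the first interior vertex (a, b) of s; since (a, y) is
   never interior, the interior of s is unchanged and flip is an involution. *)
Definition flip (s : {set T1 * T2}) : {set T1 * T2} :=
  if pick (interior_vertex s) is Some u then toggle (u.1, y) s else s.

Lemma interior_vertex_toggle a s : interior_vertex (toggle (a, y) s) =1 interior_vertex s.
Proof.
move=> [a' b]; rewrite /interior_vertex /toggle /=.
case: (boolP (e2 y b)) => hb; rewrite ?andbF //.
have ne : (a', b) != (a, y) by rewrite xpair_eqE neq_center2 ?andbF.
by case: ifP => _; rewrite ?in_setD1 ?in_setU1 (negbTE ne).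
Qed.

Lemma flipK : involutive flip.
Proof.
move=> s; rewrite /flip; case E: (pick (interior_vertex s)) => [u|]; last by rewrite E.
by rewrite (eq_pick (interior_vertex_toggle u.1 s)) E toggleK.
Qed.

Lemma has_interior_flip s : has_interior (flip s) = has_interior s.
Proof.
by rewrite /flip; case: pick => // u; exact: eq_existsb (interior_vertex_toggle _ _).
Qed.

Lemma interior_retract u : e1 x u.1 -> embed (squash u) = (u.1, y).
Proof. by rewrite /squash => /neq_center1 ->. Qed.

Lemma interior_neq (u : T1 * T2) : e2 y u.2 -> u != (u.1, y).
Proof. by case: u => a b /= hb; rewrite xpair_eqE neq_center2 ?andbF. Qed.

Lemma flip_nonempty_clique s :
  nonempty_clique sr PS s -> nonempty_clique sr PS (flip s).
Proof.
rewrite /flip; case: pickP => [u /and3P[us hu1 hu2]|_] // /andP[cl _].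
rewrite /toggle /nonempty_clique; case: ifP => uys.
  rewrite (cliqueS cl (subsetDl _ _)); apply/set0Pn; exists u.
  by rewrite in_setD1 interior_neq.
apply/andP; split; last by apply/set0Pn; exists (u.1, y); rewrite setU11.
apply: cliqueS (retract_clique cl) _; rewrite subUset subsetUl sub1set andbT.
apply/setUP; right; rewrite -(interior_retract hu1).
exact: (imset_f (embed \o squash) us).
Qed.

Lemma nonempty_clique_flip s :
  nonempty_clique sr PS (flip s) = nonempty_clique sr PS s.
Proof.
apply/idP/idP => [|]; last exact: flip_nonempty_clique.
by rewrite -{2}(flipK s); apply: flip_nonempty_clique.
Qed.

Lemma flip_sign s : s != set0 -> has_interior s ->
  (-1) ^+ #|flip s|.-1 = - (-1) ^+ #|s|.-1 :> int.
Proof.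
move=> s0 /existsP[u0 hu0]; rewrite /flip.
case: pickP => [u /and3P[us _ hu2]|none]; last by rewrite none in hu0.
rewrite card_toggle; case: ifP => uys.
  have : (1 < #|s|)%nat.
    rewrite (cardsD1 (u.1, y)) uys ltnS card_gt0; apply/set0Pn; exists u.
    by rewrite in_setD1 interior_neq.
  by case: #|s| => [|[|n]] //= _; rewrite exprS mulN1r opprK.
by move: s0; rewrite -card_gt0; case: #|s| => // n _ /=; rewrite exprS mulN1r.
Qed.

Lemma embed_squash_set s :
  nonempty_clique sr PS s -> ~~ has_interior s -> embed @: (squash @: s) = s.
Proof.
move=> /andP[cl _] /existsPn noint; rewrite -imset_comp -[RHS]imset_id.
apply: eq_in_imset => u us; apply: embed_squash; first exact: subsetP (clique_sub cl) u us.
by move: (noint u); rewrite /interior_vertex us.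
Qed.

Lemma squash_embed_set (t : {set T1 + T2}) : t \subset JS -> squash @: (embed @: t) = t.
Proof.
move/subsetP=> tJS; rewrite -imset_comp -[RHS]imset_id.
by apply: eq_in_imset => v /tJS /squash_embed.
Qed.

Lemma nonempty_clique_embed (t : {set T1 + T2}) :
  [&& nonempty_clique sr PS (embed @: t) & ~~ has_interior (embed @: t)]
    && (squash @: (embed @: t) == t) = nonempty_clique jr JS t.
Proof.
apply/idP/idP => [/andP[/andP[/andP[cl ne] _] /eqP tE]|/andP[cl ne]].
  by rewrite -tE /nonempty_clique squash_simplicial // imset_eq0.
rewrite /nonempty_clique embed_simplicial // imset_eq0 ne.
rewrite squash_embed_set ?(clique_sub cl) //.
rewrite eqxx !andbT /=; apply/existsPn => u; apply/negP => /and3P[/imsetP[v _ ->]].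
by case: v => c /=; rewrite ?irr1 ?irr2 ?andbF.
Qed.

Lemma prod_sphere_euler_char : euler_char sr PS = euler_char jr JS.
Proof.
rewrite !euler_charE (bigID has_interior) /=.
rewrite (@sum_involution0 _ _ _ flip) ?add0r; first last.
- by move=> s /andP[/andP[_ s0] hs]; rewrite flip_sign.
- by move=> s; rewrite has_interior_flip nonempty_clique_flip.
- exact: flipK.
rewrite (reindex_onto (fun t : {set T1 + T2} => embed @: t) (fun s => squash @: s));
  last by move=> s /andP[]; exact: embed_squash_set.
apply: eq_big => [t|t]; first exact: nonempty_clique_embed.
rewrite nonempty_clique_embed => /andP[/clique_sub/subsetP tJS _].
by rewrite card_in_imset //; apply: (can_in_inj (g := squash)) => v /tJS /squash_embed.
Qed.

End StrongProductSphere.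

Theorem mainTheorem3 (T1 T2 : finType) (e1 : rel T1) (e2 : rel T2)
  (HG : simple_graph e1) (HH : simple_graph e2) (x : T1) (y : T2) :
  homotopy_equivalent
    (@realization R _ (strong_rel e1 e2) (prod_sphere e1 e2 x y))
    (@realization R _ (join_rel e1 e2) (join_sphere e1 e2 x y))
  /\ euler_char (strong_rel e1 e2) (prod_sphere e1 e2 x y)
     = euler_char (join_rel e1 e2) (join_sphere e1 e2 x y).
Proof.
split; [exact: prod_sphere_homotopy_equivalent | exact: prod_sphere_euler_char].
Qed.
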